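(* Let $T$ be a reflection factorization in $G(4,2,2)$ of length $\ell\ge 3$ which contains at least one reflection from each of the conjugacy classes $S_1,S_2,S_3$. Then for any reflection $x$ in $G(4,2,2)$, there is a factorization in the Hurwitz orbit of $T$ whose right-most entry is $x$.
   Context: $G(4,2,2)$ is the group of the sixteen $2\times 2$ complex monomial matrices whose nonzero entries lie in $\{\pm1,\pm i\}$ and whose two nonzero entries multiply to $\pm 1$. A reflection is a matrix whose fixed space in $\mathbb{C}^2$ has dimension $1$. $G(4,2,2)$ contains six reflections, all of order $2$, which split into three conjugacy classes $S_1,S_2,S_3$ of $G(4,2,2)$, each of size $2$. A reflection factorization of length $\ell$ is a tuple $(r_1,\dots,r_\ell)$ of reflections in $G(4,2,2)$. The Hurwitz move $\sigma_i$ sends $(r_1,\dots,r_\ell)$ to $(r_1,\dots,r_{i-1},r_{i+1},r_{i+1}^{-1}r_ir_{i+1},r_{i+2},\dots,r_\ell)$; the Hurwitz orbit of $T$ is the set of factorizations obtained from $T$ by finite sequences of Hurwitz moves. *)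

From HB Require Import structures.
From mathcomp Require Import all_boot all_order all_algebra all_field.
Set Implicit Arguments. Unset Strict Implicit. Unset Printing Implicit Defensive.
Import Order.TTheory GRing.Theory Num.Theory.
Local Open Scope ring_scope.

Notation mat2 := 'M[algC]_2.

Definition unit4 (z : algC) : bool :=
  [|| z == 1, z == -1, z == 'i | z == - 'i].

Definition inG422 (A : mat2) : bool :=
  [&& A 0 1 == 0, A 1 0 == 0, unit4 (A 0 0), unit4 (A 1 1)
    & (A 0 0 * A 1 1 == 1) || (A 0 0 * A 1 1 == -1)]
  || [&& A 0 0 == 0, A 1 1 == 0, unit4 (A 0 1), unit4 (A 1 0)
    & (A 0 1 * A 1 0 == 1) || (A 0 1 * A 1 0 == -1)].

Definition is_reflection (A : mat2) : bool :=
  inG422 A && (\rank (eigenspace A 1) == 1)%N.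

Definition conjG422 (A B : mat2) : Prop :=
  exists2 g : mat2, inG422 g & B = g^-1 * A * g.

(* Hurwitz move sigma_(i+1) (0-indexed position i): replaces the entries
   r_i, r_(i+1) by r_(i+1), r_(i+1)^-1 r_i r_(i+1). *)
Definition hurwitz_move (i : nat) (s : seq mat2) : seq mat2 :=
  take i s ++ [:: nth 0 s i.+1; (nth 0 s i.+1)^-1 * nth 0 s i * nth 0 s i.+1]
    ++ drop i.+2 s.

Inductive hurwitz_reach (s : seq mat2) : seq mat2 -> Prop :=
  | hr_refl : hurwitz_reach s s
  | hr_step t i : hurwitz_reach s t -> (i.+1 < size t)%N ->
      hurwitz_reach s (hurwitz_move i t).

From HB Require Import structures.
From mathcomp Require Import all_boot all_order all_algebra all_field.
Set Implicit Arguments. Unset Strict Implicit. Unset Printing Implicit Defensive.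
Import GRing.Theory Num.Theory.
Local Open Scope ring_scope.

(* Every reflection of G(4,2,2) is +-rho_k for one of three involutions rho_k,
   and the reflections conjugate to rho_k are exactly +-rho_k: the classes are
   told apart by the conjugation invariant A01^2 + A10^2.  Conjugating +-rho_k
   by +-rho_j gives back +-rho_k when j = k and flips its sign otherwise.
   Hurwitz moves carry an entry conjugate to x to the right end, conjugating it
   by every entry it passes, so it arrives as x or -x.  In the second case,
   carry an entry of another class behind it and make one more move, which
   turns -x into x. *)

Lemma ord2_cases (i : 'I_2) : i = 0 \/ i = 1.
Proof. by case: i => [[|[|//]] ?]; [left | right]; apply: val_inj. Qed.

Section Mx2.
Variable R : nzRingType.

Definition mx2 (a b c d : R) : 'M[R]_2 :=
  \matrix_(i, j) if i == 0 then if j == 0 then a else b else if j == 0 then c else d.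

Lemma mx2E a b c d :
  (mx2 a b c d 0 0 = a) * (mx2 a b c d 0 1 = b) *
  (mx2 a b c d 1 0 = c) * (mx2 a b c d 1 1 = d).
Proof. by rewrite !mxE. Qed.

Lemma mx2_eta (A : 'M[R]_2) : A = mx2 (A 0 0) (A 0 1) (A 1 0) (A 1 1).
Proof.
by apply/matrixP=> i j; rewrite mxE; case: (ord2_cases i) => ->; case: (ord2_cases j) => ->.
Qed.

Lemma mx2_inj a b c d a' b' c' d' :
  mx2 a b c d = mx2 a' b' c' d' -> [/\ a = a', b = b', c = c' & d = d'].
Proof.
move=> e; have E i j := congr1 (fun M : 'M[R]_2 => M i j) e.
by move: (E 0 0) (E 0 1) (E 1 0) (E 1 1); rewrite !mx2E.
Qed.

Lemma mx2_1 : 1 = mx2 1 0 0 1.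
Proof. by rewrite {1}[1]mx2_eta !mxE. Qed.

Lemma oppmx2 a b c d : - mx2 a b c d = mx2 (- a) (- b) (- c) (- d).
Proof. by rewrite {1}[- _]mx2_eta !mxE. Qed.

Lemma mx2_sub1 a b c d : mx2 a b c d - 1 = mx2 (a - 1) b c (d - 1).
Proof. by rewrite {1}[_ - 1]mx2_eta !mxE /= !subr0. Qed.

Lemma mulmx2 a b c d a' b' c' d' :
  mx2 a b c d * mx2 a' b' c' d' =
  mx2 (a * a' + b * c') (a * b' + b * d') (c * a' + d * c') (c * b' + d * d').
Proof.
apply/matrixP=> i j; rewrite -mulmxE !mxE !big_ord_recl big_ord0 !mxE.
by case: (ord2_cases i) => ->; case: (ord2_cases j) => ->; rewrite /= addr0.
Qed.

Lemma mxtrace_mx2 a b c d : \tr (mx2 a b c d) = a + d.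
Proof. by rewrite /mxtrace !big_ord_recl big_ord0 !mxE addr0. Qed.

End Mx2.

Lemma det_mx2 (R : comNzRingType) (a b c d : R) : \det (mx2 a b c d) = a * d - b * c.
Proof.
rewrite (expand_det_row _ 0) !big_ord_recl big_ord0 addr0 /cofactor !det_mx11 !mxE /=.
by rewrite expr0 expr1 mul1r mulN1r mulrN; congr (_ * _ - _ * _); rewrite !mxE.
Qed.

Lemma rank_eigenspace_eq1 (F : fieldType) (A : 'M[F]_2) a :
  (\rank (eigenspace A a) == 1)%N = (A != a%:M) && (\det (A - a%:M) == 0).
Proof.
rewrite /eigenspace mxrank_ker -subr_eq0; move: (A - a%:M) => B.
rewrite -mxrank_eq0 -[\det B == 0]negbK -unitfE -unitmxE -row_free_unit /row_free.
by case: (\rank B) (rank_leq_row B) => [|[|[|]]].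
Qed.

Lemma is_reflectionE A : is_reflection A = [&& inG422 A, A != 1 & \det (A - 1) == 0].
Proof. by rewrite /is_reflection rank_eigenspace_eq1 andbA. Qed.

Lemma sqr_eq_scaled (F : idomainType) (a d u v : F) :
  a ^+ 2 = d ^+ 2 -> a != 0 -> a * u = d * v -> u ^+ 2 = v ^+ 2.
Proof.
by move=> ad a0 e; apply: (mulfI (expf_neq0 2 a0)); rewrite -exprMn e exprMn ad.
Qed.

Lemma unit4_neq0 a : unit4 a -> a != 0.
Proof. by case/or4P => /eqP ->; rewrite ?oppr_eq0 ?oner_eq0 ?neq0Ci. Qed.

Lemma unit4_sqr_cofactor a d :
  unit4 a -> (a * d == 1) || (a * d == -1) -> d ^+ 2 = a ^+ 2.
Proof.
move=> ua ad; have ad2 : a ^+ 2 * d ^+ 2 = 1.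
  by rewrite -exprMn; case/orP: ad => /eqP ->; rewrite ?sqrrN expr1n.
have [a2|a2] : a ^+ 2 = 1 \/ a ^+ 2 = -1.
  by case/or4P: ua => /eqP ->; rewrite ?sqrrN ?expr1n ?sqrCi; [left|left|right|right].
- by rewrite a2 mul1r in ad2 *.
- by rewrite a2 mulN1r in ad2 *; rewrite -ad2 opprK.
Qed.

Lemma inG422_shape g : inG422 g -> exists a d,
  [/\ unit4 a, (a * d == 1) || (a * d == -1) & g = mx2 a 0 0 d \/ g = mx2 0 a d 0].
Proof.
case/orP => /and5P [/eqP z1 /eqP z2 ua ud ad].
- by exists (g 0 0), (g 1 1); split=> //; left; rewrite {1}[g]mx2_eta z1 z2.
- by exists (g 0 1), (g 1 0); split=> //; right; rewrite {1}[g]mx2_eta z1 z2.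
Qed.

Definition rho (k : 'I_3) : mat2 :=
  match val k with
  | 0 => mx2 1 0 0 (-1)
  | 1 => mx2 0 1 1 0
  | _ => mx2 0 'i (- 'i) 0
  end.

Definition refl_class (k : 'I_3) : pred mat2 := [pred A | (A == rho k) || (A == - rho k)].

Lemma reflection_classify A : is_reflection A -> exists k, A \in refl_class k.
Proof.
rewrite is_reflectionE => /and3P [/inG422_shape [a [d [ua ad [->|->]]]] A1].
- rewrite mx2_sub1 det_mx2 mulr0 subr0 mulf_eq0 !subr_eq0.
  case/orP=> /eqP e; move: ad A1; rewrite e ?mul1r ?mulr1 => /orP [] /eqP -> A1;
    (try by rewrite -mx2_1 eqxx in A1);
    by exists 0; rewrite inE /rho /= oppmx2 opprK oppr0 eqxx ?orbT.
- rewrite mx2_sub1 det_mx2 sub0r mulrNN mulr1 subr_eq0 eq_sym => /eqP /mulr1_eq <-.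
  case/or4P: ua => /eqP ->; rewrite ?invrN ?invr1 ?invCi ?opprK;
    [exists 1 | exists 1 | exists 2 | exists 2];
    by rewrite inE /rho /= oppmx2 ?opprK oppr0 eqxx ?orbT.
Qed.

Lemma refl_class_reflection k A : A \in refl_class k -> is_reflection A.
Proof.
rewrite is_reflectionE inE => /orP [] /eqP ->;
  case: k => [[|[|[|//]]] ?]; rewrite /rho /= ?oppmx2 ?opprK ?oppr0; apply/and3P; split.
all: rewrite /inG422 /unit4 ?mx2_sub1 ?det_mx2 ?mx2E /=.
all: rewrite ?(mulrN, mulNr, mul1r, mulr1, mul0r, mulr0, mulCii, opprK, oppr0,
                subr0, sub0r, subrr) ?eqxx /= ?orbT //.
all: apply/eqP => /(congr1 mxtrace); rewrite mxtrace_mx2 mxtrace1 ?subrr ?addNr ?addr0.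
all: by move/eqP; rewrite eq_sym pnatr_eq0.
Qed.

Definition offdiag_sq (A : mat2) : algC := A 0 1 ^+ 2 + A 1 0 ^+ 2.

Lemma offdiag_sq_conjG422 A B : conjG422 A B -> offdiag_sq B = offdiag_sq A.
Proof.
case=> g /inG422_shape [a [d [ua ad gE]]] {B}->; set B := g^-1 * A * g.
have a0 := unit4_neq0 ua; have d2a2 := unit4_sqr_cofactor ua ad.
have d0 : d != 0 by rewrite -sqrf_eq0 d2a2 sqrf_eq0.
have ug : g \in unitmx.
  rewrite unitmxE unitfE; case: gE => ->;
    by rewrite det_mx2 ?mulr0 ?mul0r ?subr0 ?sub0r ?oppr_eq0 mulf_neq0.
have gB : g * B = A * g by rewrite /B !mulrA mulrV // mul1r.
have sq_a u v : a * u = v * d -> u ^+ 2 = v ^+ 2.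
  by rewrite [v * d]mulrC; exact: sqr_eq_scaled (esym d2a2) a0.
have sq_d u v : d * u = v * a -> u ^+ 2 = v ^+ 2.
  by rewrite [v * a]mulrC; exact: sqr_eq_scaled d2a2 d0.
rewrite /offdiag_sq; case: gE gB => ->.
all: rewrite {1}(mx2_eta B) {1}(mx2_eta A) !mulmx2 !(mul0r, mulr0, add0r, addr0).
- by case/mx2_inj => _ /sq_a -> /sq_d -> _.
- by case/mx2_inj => /sq_a -> _ _ /sq_d ->; rewrite addrC.
Qed.

Lemma offdiag_sq_refl_class k A : A \in refl_class k -> offdiag_sq A = [:: 0; 2; -2]`_k.
Proof.
rewrite inE /offdiag_sq => /orP [] /eqP ->; case: k => [[|[|[|//]]] ?];
  by rewrite /rho /= ?oppmx2 !mx2E ?oppr0 ?opprK ?sqrrN ?sqrCi ?expr0n ?expr1n ?addr0 // -opprD.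
Qed.

Lemma offdiag_sq_refl_class_inj k j A B : A \in refl_class k -> B \in refl_class j ->
  offdiag_sq A = offdiag_sq B -> k = j.
Proof.
move=> /offdiag_sq_refl_class -> /offdiag_sq_refl_class ->.
case: k j => [[|[|[|//]]] ?] [[|[|[|//]]] ?] /=; (try by move=> _; apply: val_inj);
  by move/eqP; rewrite -subr_eq0 ?sub0r ?subr0 ?opprK -?opprD ?oppr_eq0 -?natrD pnatr_eq0.
Qed.

Lemma conjG422_refl_class A B k :
  is_reflection A -> conjG422 A B -> B \in refl_class k -> A \in refl_class k.
Proof.
move=> /reflection_classify [j Aj] /offdiag_sq_conjG422 AB Bk.
by rewrite -(offdiag_sq_refl_class_inj Aj Bk (esym AB)).
Qed.

Lemma rho_refl_class k : rho k \in refl_class k.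
Proof. by rewrite inE eqxx. Qed.

Lemma refl_class_pm k A B : A \in refl_class k -> B \in refl_class k -> B = A \/ B = - A.
Proof. by rewrite !inE => /orP [] /eqP -> /orP [] /eqP ->; rewrite ?opprK; auto. Qed.

Lemma rho_sqr k : rho k * rho k = 1.
Proof.
case: k => [[|[|[|//]]] ?]; rewrite /rho /= mulmx2 mx2_1;
  by rewrite ?(mulrN, mulNr, mul1r, mulr1, mul0r, mulr0, addr0, add0r, opprK, oppr0, mulCii).
Qed.

Lemma rho_conj k j : rho j * rho k * rho j = if k == j then rho k else - rho k.
Proof.
case: k j => [[|[|[|//]]] ?] [[|[|[|//]]] ?]; rewrite /rho /= !mulmx2 ?oppmx2;
  by rewrite ?(mulrN, mulNr, mul1r, mulr1, mul0r, mulr0, addr0, add0r, opprK, oppr0, mulCii).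
Qed.

Lemma rho_inv k : (rho k)^-1 = rho k.
Proof.
have u : rho k \is a GRing.unit by apply/unitrP; exists (rho k); rewrite rho_sqr.
by rewrite -[LHS]mulr1 -(rho_sqr k) mulrA mulVr // mul1r.
Qed.

Definition conjm (a b : mat2) : mat2 := b^-1 * a * b.

Lemma conjm_refl_class A B k j : A \in refl_class k -> B \in refl_class j ->
  conjm A B = if k == j then A else - A.
Proof.
rewrite !inE /conjm => /orP [] /eqP -> /orP [] /eqP ->;
  by rewrite ?invrN rho_inv ?mulrN ?mulNr ?opprK rho_conj; case: (k == j); rewrite ?opprK.
Qed.

Lemma refl_classN k A : (- A \in refl_class k) = (A \in refl_class k).
Proof. by rewrite !inE eqr_oppLR orbC eqr_oppLR opprK. Qed.

Lemma foldl_conjm_refl_class k A q :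
  all is_reflection q -> A \in refl_class k -> foldl conjm A q \in refl_class k.
Proof.
elim: q A => //= B q IHq A /andP [/reflection_classify [j Bj] q_refl] Ak.
by apply: IHq => //; rewrite (conjm_refl_class Ak Bj); case: (k == j); rewrite ?refl_classN.
Qed.

Lemma hurwitz_reach_trans s t u :
  hurwitz_reach s t -> hurwitz_reach t u -> hurwitz_reach s u.
Proof. by move=> st; elim=> // v i _ IH lt_i; apply: hr_step. Qed.

Lemma hurwitz_move_cat p a b q :
  hurwitz_move (size p) (p ++ a :: b :: q) = p ++ b :: conjm a b :: q.
Proof.
rewrite /hurwitz_move take_size_cat // !nth_cat ltnn ltnNge leqnSn /= subnn subSnn /=.
rewrite drop_cat ltnNge (leq_trans (leqnSn _) (leqnSn _)) /=.
by rewrite !subSn ?leqnSn // subnn /= drop0.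
Qed.

Lemma hurwitz_reach_swap p a b q :
  hurwitz_reach (p ++ a :: b :: q) (p ++ b :: conjm a b :: q).
Proof.
rewrite -hurwitz_move_cat; apply: hr_step; first exact: hr_refl.
by rewrite size_cat /= !addnS !ltnS leq_addr.
Qed.

Lemma hurwitz_reach_to_end p a q :
  hurwitz_reach (p ++ a :: q) (rcons (p ++ q) (foldl conjm a q)).
Proof.
elim: q p a => [|b q IHq] p a /=; first by rewrite cats0 -cats1; exact: hr_refl.
apply: hurwitz_reach_trans (hurwitz_reach_swap p a b q) _.
by have := IHq (rcons p b) (conjm a b); rewrite !cat_rcons.
Qed.

Lemma hurwitz_reach_flip_last s a y k j :
  all is_reflection s -> y \in s -> a \in refl_class k -> y \in refl_class j -> j != k ->
  exists s', hurwitz_reach (rcons s a) (rcons s' (- a)).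
Proof.
move=> s_refl ys ak yj jk; case/splitPr: ys s_refl => p q.
rewrite all_cat /= => /and3P [_ _ q_refl].
set y' := foldl conjm y (rcons q a).
have y'j : y' \in refl_class j.
  by apply: foldl_conjm_refl_class yj; rewrite all_rcons (refl_class_reflection ak).
have <- : conjm a y' = - a by rewrite (conjm_refl_class ak y'j) eq_sym (negbTE jk).
exists (rcons (p ++ q) y'); rewrite rcons_cat.
apply: hurwitz_reach_trans (hurwitz_reach_to_end p y (rcons q a)) _.
rewrite -/y' -!cats1 -!catA.
by move: (hurwitz_reach_swap (p ++ q) a y' [::]); rewrite -!catA.
Qed.

Theorem proposition3p8 (T : seq 'M[algC]_2) :
  all is_reflection T -> (3 <= size T)%N ->
  (forall s : 'M[algC]_2, is_reflection s ->
     exists2 r, r \in T & conjG422 r s) ->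
  forall x : 'M[algC]_2, is_reflection x ->
  exists T0 : seq 'M[algC]_2, hurwitz_reach T (rcons T0 x).
Proof.
move=> T_refl _ T_classes x x_refl; have [k xk] := reflection_classify x_refl.
have [r rT rx] := T_classes x x_refl.
have rk := conjG422_refl_class (allP T_refl r rT) rx xk.
case/splitPr: rT T_refl T_classes => p q T_refl T_classes.
have pq_refl : all is_reflection (p ++ q).
  by move: T_refl; rewrite !all_cat /= => /and3P [-> _ ->].
have r'k : foldl conjm r q \in refl_class k.
  by apply: foldl_conjm_refl_class rk; move: pq_refl; rewrite all_cat => /andP [].
have reach_r' := hurwitz_reach_to_end p r q.
have [r'x | r'x] := refl_class_pm xk r'k; first by exists (p ++ q); rewrite -r'x.
have [j jk] : exists j : 'I_3, j != k.
  by case: {xk rk r'k r'x} k => [[|[|[|]]] ?] //; [exists 1 | exists 0 | exists 0].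
have [y yT yj] := T_classes (rho j) (refl_class_reflection (rho_refl_class j)).
have {}yj := conjG422_refl_class (allP T_refl y yT) yj (rho_refl_class j).
have y_pq : y \in p ++ q.
  have yr : y != r.
    by apply: contraNneq jk => yr; apply/eqP/(offdiag_sq_refl_class_inj yj rk); rewrite yr.
  by move: yT; rewrite !mem_cat in_cons (negbTE yr).
have [s' reach_x] := hurwitz_reach_flip_last pq_refl y_pq r'k yj jk.
exists s'; apply: hurwitz_reach_trans reach_r' _.
by rewrite r'x; rewrite r'x opprK in reach_x.
Qed.
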